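(* Let $F$ be an SCF on $n$ voters and three alternatives. Then for every pair of distinct alternatives $a,b$, \[ M^{a,b}(F) \le 6 \sum_{i=1}^n M_i(F). \]
   Context: $L_3$ is the set of linear orders on three alternatives; an SCF is a map $F:(L_3)^n\to\{$alternatives$\}$. For a profile $x\in(L_3)^n$ and alternatives $a\ne b$, $x^{a,b}\in\{0,1\}^n$ is the vector with $x^{a,b}_i=1$ iff voter $i$ ranks $a$ above $b$. $M^{a,b}(F)=\Pr[F(x)=a,\ F(x')=b]$, where $x,x'$ are uniformly random profiles subject to the single restriction $x^{a,b}=x'^{a,b}$ (i.e. $x$ uniform and $x'$ uniform among profiles with the same $a$-vs-$b$ preferences). $M_i(F)$ is the probability that $x_i'$ is a profitable manipulation by voter $i$ at $x$ (i.e. voter $i$, according to $x_i$, strictly prefers $F(x_i',x_{-i})$ to $F(x)$), where $x_1,\dots,x_n,x_i'$ are independent uniform elements of $L_3$. *)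

From HB Require Import structures.
From mathcomp Require Import all_boot all_order all_algebra all_fingroup.
Set Implicit Arguments. Unset Strict Implicit. Unset Printing Implicit Defensive.
Import Order.TTheory GRing.Theory Num.Theory.
Local Open Scope ring_scope.

(* A linear order on the alternatives is represented by
   its rank permutation r : {perm 'I_3}; r c is the position of alternative c
   (0 = top). *)
Definition alt := 'I_3.
Definition L3 := {perm 'I_3}.
Definition above (r : L3) (c d : alt) : bool := (r c < r d)%N.

Definition profile (n : nat) := {ffun 'I_n -> L3}.
Definition SCF (n : nat) := profile n -> alt.

Definition pairvec n (x : profile n) (a b : alt) : {ffun 'I_n -> bool} :=
  [ffun i => above (x i) a b].

(* M^{a,b}(F): x uniform, x' uniform among profiles with x'^{a,b} = x^{a,b} *)
Definition Mab n (F : SCF n) (a b : alt) : rat :=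
  \sum_(x : profile n)
    (#|profile n|%:R)^-1 *
    ((#|[set x' : profile n | pairvec x' a b == pairvec x a b]|%:R)^-1 *
     (#|[set x' : profile n | (pairvec x' a b == pairvec x a b)
                                && (F x == a) && (F x' == b)]|%:R)).

Definition upd n (x : profile n) (i : 'I_n) (y : L3) : profile n :=
  [ffun j => if j == i then y else x j].

Definition Mi n (F : SCF n) (i : 'I_n) : rat :=
  (#|[set p : profile n * L3 | above (p.1 i) (F (upd p.1 i p.2)) (F p.1)]|%:R)
  / (#|profile n|%:R * #|L3|%:R).

From HB Require Import structures.
From mathcomp Require Import all_boot all_order all_algebra all_fingroup.
From mathcomp Require Import zify ring.
Set Implicit Arguments. Unset Strict Implicit. Unset Printing Implicit Defensive.
Import Order.TTheory GRing.Theory Num.Theory.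
Open Scope nat_scope.

(* Grouping profiles by their a-vs-b vector
   v, the fibre {x | x^{a,b} = v} is a "box" prod_i S_i where each S_i is a set
   of 3 linear orders all ranking a above b, or all ranking b above a.  The
   heart of the proof is the box inequality [pairs_le_manip]: for every
   G : profile -> alt and every such box of n voters,
     #{(x,x') in box^2 | G x = a, G x' = b} <= 3^n * #{manipulations inside the box},
   proved by induction on n, peeling off the first voter.  The one-voter case
   [one_voter_bound] says  |A| |B| <= 3 |A n B| + gains(f) + gains(g)  for
   A = f^-1(a), B = g^-1(b) inside a 3-element set of orders: each order p in
   B \ A either ranks a on top (so every q in A is a profitable deviation for f)
   or ranks b at the bottom (so every q outside B is one for g).  Summing the
   box inequality over all fibres gives the counting bound [pair_count_bound],
   and dividing by #profiles * 3^n (fibre size) and #profiles * 6 yields the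
   theorem. *)

Lemma rank_inj (p : L3) (x y : alt) : (p x = p y :> nat) -> x = y.
Proof. by move=> h; apply: (@perm_inj _ p); apply: val_inj. Qed.

Lemma above_flip (r : L3) (a b : alt) : a != b -> above r b a = ~~ above r a b.
Proof.
move=> ab; rewrite /above.
have : (r a : nat) <> r b by move=> h; rewrite (rank_inj h) eqxx in ab.
lia.
Qed.

Lemma card_L3 : #|L3| = 6.
Proof. by rewrite card_Sn. Qed.

(* Half of the orders rank a above b: composing with the transposition (a b)
   maps the a-over-b orders bijectively onto the others. *)
Lemma card_above (a b : alt) : a != b -> #|[set r : L3 | above r a b]| = 3.
Proof.
move=> ab; set X := [set r : L3 | above r a b].
pose flip := fun r : L3 => (tperm a b * r)%g.
have flipC : ~: X = flip @^-1: X.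
  by apply/setP => r; rewrite !inE /above !permM tpermL tpermR -/(above r b a) above_flip.
have := cardsC X; rewrite flipC card_preimset ?card_L3; last exact: mulgI.
lia.
Qed.

Lemma sum_pred_card (T : finType) (S : {pred T}) (P : pred T) :
  \sum_(q in S) P q = #|[set q in S | P q]|.
Proof.
rewrite -sum1_card big_mkcond [RHS]big_mkcond; apply: eq_bigr => q _.
by rewrite inE; case: (q \in S); case: (P q).
Qed.

(* The one-voter game: the voter's ballot ranges over S and the outcome is
   f ballot.  [gain S f p] counts the ballots q in S that a voter with true
   order p strictly prefers to report; [gains S f] sums this over p in S. *)
Definition gain (S : {set L3}) (f : L3 -> alt) (p : L3) : nat :=
  \sum_(q in S) above p (f q) (f p).
Definition gains (S : {set L3}) (f : L3 -> alt) : nat :=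
  \sum_(p in S) gain S f p.

Lemma gain_ge (S : {set L3}) (f : L3 -> alt) (p : L3) (P : pred L3) :
  (forall q, q \in S -> P q -> above p (f q) (f p)) ->
  #|[set q in S | P q]| <= gain S f p.
Proof.
move=> hP; rewrite -sum_pred_card; apply: leq_sum => q qS.
by case: (boolP (P q)) => // /(hP q qS) ->.
Qed.

(* Each p in B \ A (g p = w, f p <> u) has u on top or w at the bottom; in the
   first case all of A is profitable for f, in the second all of S \ B for g. *)
Lemma gains_lower (S : {set L3}) (u w : alt) (f g : L3 -> alt) :
  (forall r, r \in S -> above r u w) ->
  #|[set t in S | (g t == w) && (f t != u)]| *
    minn #|[set t in S | f t == u]| #|[set t in S | g t != w]|
  <= gains S f + gains S g.
Proof.
move=> huw; set BA := [set t in S | _].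
have BA_S : BA \subset S by apply/subsetP => t; rewrite inE => /andP[].
rewrite /gains -big_split /= (big_setID BA) (setIidPr BA_S) /=.
apply: leq_trans (leq_addr _ _); rewrite -sum_nat_const.
apply: leq_sum => p; rewrite inE => /and3P[pS /eqP gpw fpu].
have := huw p pS; rewrite /above => puw.
have [pu0 | pw2] : (p u = 0 :> nat) \/ (p w = 2 :> nat).
  by have := ltn_ord (p w); lia.
- apply: leq_trans (leq_addr _ _); apply: leq_trans (geq_minl _ _) _.
  apply: gain_ge => q _ /eqP fqu; rewrite /above fqu.
  have : (p (f p) : nat) <> p u by move/rank_inj=> fpu'; rewrite fpu' eqxx in fpu.
  lia.
- apply: leq_trans (leq_addl _ _); apply: leq_trans (geq_minr _ _) _.
  apply: gain_ge => q _ gqw; rewrite /above gpw pw2.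
  have : (p (g q) : nat) <> p w by move/rank_inj=> gqw'; rewrite gqw' eqxx in gqw.
  by have := ltn_ord (p (g q)); lia.
Qed.

Lemma one_voter_bound (S : {set L3}) (u w : alt) (f g : L3 -> alt) :
  #|S| = 3 -> (forall r, r \in S -> above r u w) ->
  (\sum_(t in S) (f t == u : nat)) * (\sum_(t in S) (g t == w : nat)) <=
  3 * \sum_(t in S) ((f t == u) * (g t == w)) + gains S f + gains S g.
Proof.
move=> S3 huw; have := gains_lower f g huw; rewrite -!sum_pred_card.
set al := \sum_(t in S) (f t == u : nat); set be := \sum_(t in S) (g t == w : nat).
set i := \sum_(t in S) ((f t == u) * (g t == w)).
set d := \sum_(t in S) ((g t == w) && (f t != u) : nat).
set c := \sum_(t in S) (g t != w : nat).
have be_id : be = i + d.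
  by rewrite -big_split; apply: eq_bigr => t _; case: (f t == u); case: (g t == w).
have c_id : be + c = 3.
  by rewrite -S3 -sum1_card -big_split; apply: eq_bigr => t _; case: (g t == w).
have al_d : al + d <= 3.
  rewrite -S3 -sum1_card -big_split; apply: leq_sum => t _.
  by case: (f t == u); case: (g t == w).
case: (leqP al c) => hm; nia.
Qed.

Definition oriented (a b : alt) (T : {set L3}) :=
  (forall r, r \in T -> above r a b) \/ (forall r, r \in T -> above r b a).

Lemma one_voter_bound_oriented (S : {set L3}) (a b : alt) (f g : L3 -> alt) :
  #|S| = 3 -> oriented a b S ->
  (\sum_(t in S) (f t == a : nat)) * (\sum_(t in S) (g t == b : nat)) <=
  3 * \sum_(t in S) ((f t == a) * (g t == b)) + gains S f + gains S g.
Proof.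
move=> S3 [hab | hba]; first exact: one_voter_bound.
have := one_voter_bound g f S3 hba.
under [in X in _ <= X -> _]eq_bigr => t _ do rewrite mulnC.
by rewrite mulnC addnAC.
Qed.

Definition pcons n (t : L3) (z : profile n) : profile n.+1 :=
  [ffun i => if unlift ord0 i is Some j then z j else t].
Definition ptail n (x : profile n.+1) : profile n := [ffun j => x (lift ord0 j)].

Lemma pcons0 n t (z : profile n) : pcons t z ord0 = t.
Proof. by rewrite ffunE unlift_none. Qed.

Lemma pconsS n t (z : profile n) j : pcons t z (lift ord0 j) = z j.
Proof. by rewrite ffunE liftK. Qed.

Lemma pcons_bij n : bijective (fun p : L3 * profile n => pcons p.1 p.2).
Proof.
exists (fun x : profile n.+1 => (x ord0, ptail x)) => [[t z] | x] /=.
  by congr (_, _); [exact: pcons0 | apply/ffunP => j; rewrite ffunE pconsS].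
by apply/ffunP => i; rewrite ffunE; case: unliftP => [j ->|->] //; rewrite ffunE.
Qed.

Lemma upd_pcons0 n t (z : profile n) y : upd (pcons t z) ord0 y = pcons y z.
Proof.
apply/ffunP => i; rewrite !ffunE; case: unliftP => [j ->|->]; last by rewrite eqxx.
by rewrite eq_sym (negbTE (neq_lift _ _)).
Qed.

Lemma upd_pconsS n t (z : profile n) j y :
  upd (pcons t z) (lift ord0 j) y = pcons t (upd z j y).
Proof.
apply/ffunP => i; rewrite !ffunE; case: unliftP => [k ->|->].
  by rewrite (inj_eq (@lift_inj _ ord0)) ffunE.
by rewrite (negbTE (neq_lift _ _)).
Qed.

Definition inbox n (S : 'I_n -> {set L3}) (x : profile n) : bool :=
  [forall i, x i \in S i].
Definition btail n (S : 'I_n.+1 -> {set L3}) : 'I_n -> {set L3} :=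
  fun j => S (lift ord0 j).

Lemma inbox_pcons n (S : 'I_n.+1 -> {set L3}) t z :
  inbox S (pcons t z) = (t \in S ord0) && inbox (btail S) z.
Proof.
apply/forallP/andP => [h | [h0 /forallP h] i].
  split; first by have := h ord0; rewrite pcons0.
  by apply/forallP => j; have := h (lift ord0 j); rewrite pconsS.
by case: (unliftP ord0 i) => [j ->|->]; rewrite ?pconsS ?pcons0.
Qed.

Lemma sum_box_cons n (S : 'I_n.+1 -> {set L3}) (H : profile n.+1 -> nat) :
  \sum_(x | inbox S x) H x =
  \sum_(t in S ord0) \sum_(z | inbox (btail S) z) H (pcons t z).
Proof.
rewrite pair_big_dep (reindex _ (onW_bij _ (@pcons_bij n))) /=.
by apply: eq_bigl => -[t z]; rewrite inbox_pcons.
Qed.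

Lemma sum_box_const n (S : 'I_n -> {set L3}) (c : nat) :
  (forall i, #|S i| = 3) -> \sum_(x | inbox S x) c = 3 ^ n * c.
Proof.
elim: n S => [|n IH] S S3.
  rewrite (eq_bigl predT) => [|x]; last by apply/forallP => -[].
  by rewrite sum_nat_const cardT -cardE card_ffun card_ord.
rewrite sum_box_cons (eq_bigr (fun=> 3 ^ n * c)) => [|t _]; last by apply: IH => j; apply: S3.
by rewrite sum_nat_const S3 expnS mulnA.
Qed.

Definition pairs_box n (S : 'I_n -> {set L3}) (G : profile n -> alt) (a b : alt) : nat :=
  \sum_(x | inbox S x) \sum_(x' | inbox S x') ((G x == a) * (G x' == b)).

Definition manip_box n (S : 'I_n -> {set L3}) (G : profile n -> alt) : nat :=
  \sum_(i < n) \sum_(x | inbox S x) \sum_(y in S i) above (x i) (G (upd x i y)) (G x).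

Section FirstVoter.
Variables (n : nat) (S : 'I_n.+1 -> {set L3}) (G : profile n.+1 -> alt).

Lemma manip_box_cons :
  manip_box S G =
  \sum_(z | inbox (btail S) z) gains (S ord0) (fun t => G (pcons t z)) +
  \sum_(t in S ord0) manip_box (btail S) (fun z => G (pcons t z)).
Proof.
rewrite /manip_box big_ord_recl; congr (_ + _).
  rewrite sum_box_cons exchange_big /=; apply: eq_bigr => z _.
  apply: eq_bigr => t _; apply: eq_bigr => y _.
  by rewrite pcons0 upd_pcons0.
rewrite [RHS]exchange_big /=; apply: eq_bigr => j _.
rewrite sum_box_cons; apply: eq_bigr => t _; apply: eq_bigr => z _.
by apply: eq_bigr => y _; rewrite pconsS upd_pconsS.
Qed.

Lemma pairs_box_cons (a b : alt) :
  pairs_box S G a b =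
  \sum_(z | inbox (btail S) z) \sum_(w | inbox (btail S) w)
    ((\sum_(t in S ord0) (G (pcons t z) == a : nat)) *
     (\sum_(t in S ord0) (G (pcons t w) == b : nat))).
Proof.
rewrite /pairs_box sum_box_cons exchange_big /=; apply: eq_bigr => z _.
under [RHS]eq_bigr => w _ do rewrite big_distrlr /=.
under eq_bigr => t _ do rewrite sum_box_cons exchange_big /=.
by rewrite exchange_big.
Qed.

End FirstVoter.

(* The box inequality: induction on the number of voters, applying the
   one-voter inequality to the first voter for each pair (z, w) of profiles
   of the others. *)
Lemma pairs_le_manip n (S : 'I_n -> {set L3}) (G : profile n -> alt) (a b : alt) :
  a != b -> (forall i, #|S i| = 3) -> (forall i, oriented a b (S i)) ->
  pairs_box S G a b <= 3 ^ n * manip_box S G.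
Proof.
move=> ab; elim: n S G => [|n IH] S G S3 Sor.
  rewrite /pairs_box big1 // => x _; rewrite big1 // => x' _.
  have -> : x' = x by apply/ffunP => -[].
  by case: eqP => // ->; rewrite (negbTE ab).
have S3' : forall j, #|btail S j| = 3 by move=> j; apply: S3.
rewrite pairs_box_cons manip_box_cons.
set S0 := S ord0; set S' := btail S.
pose m z := gains S0 (fun t => G (pcons t z)).
pose K t z w := (G (pcons t z) == a) * (G (pcons t w) == b).
set M0 := \sum_(z | inbox S' z) gains S0 _.
have one_voter : forall z w,
    (\sum_(t in S0) (G (pcons t z) == a : nat)) * (\sum_(t in S0) (G (pcons t w) == b : nat))
    <= 3 * \sum_(t in S0) K t z w + m z + m w.
  by move=> z w; apply: one_voter_bound_oriented; [apply: S3 | apply: Sor].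
have summed : \sum_(z | inbox S' z) \sum_(w | inbox S' w) (3 * \sum_(t in S0) K t z w + m z + m w)
    = 3 * \sum_(t in S0) pairs_box S' (fun z => G (pcons t z)) a b + 3 ^ n * M0 + 3 ^ n * M0.
  under eq_bigr => z _ do rewrite 2!big_split /= sum_box_const // -big_distrr /=.
  rewrite 2!big_split /= -2!big_distrr /= sum_box_const //; congr (_ + _ + _).
  congr (_ * _).
  under eq_bigr => z _ do rewrite exchange_big.
  by rewrite exchange_big.
have IHt : \sum_(t in S0) pairs_box S' (fun z => G (pcons t z)) a b
    <= 3 ^ n * \sum_(t in S0) manip_box S' (fun z => G (pcons t z)).
  by rewrite big_distrr; apply: leq_sum => t _; apply: IH => // j; apply: Sor.
apply: leq_trans (leq_sum _ (fun z _ => leq_sum _ (fun w _ => one_voter z w))) _.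
rewrite summed expnS; nia.
Qed.

Definition fibre_box n (a b : alt) (v : {ffun 'I_n -> bool}) : 'I_n -> {set L3} :=
  fun i => [set r : L3 | above r a b == v i].

Lemma inbox_fibre n (a b : alt) (v : {ffun 'I_n -> bool}) (x : profile n) :
  inbox (fibre_box a b v) x = (pairvec x a b == v).
Proof.
apply/forallP/eqP => [h | <- i]; last by rewrite inE ffunE.
by apply/ffunP => i; have := h i; rewrite inE ffunE => /eqP.
Qed.

Lemma fibre_boxE n (a b : alt) (v : {ffun 'I_n -> bool}) (i : 'I_n) : a != b ->
  fibre_box a b v i = if v i then [set r | above r a b] else [set r | above r b a].
Proof.
move=> ab; apply/setP => r; rewrite !inE.
by case: (v i); rewrite inE ?eqb_id // eqbF_neg (above_flip r ab).
Qed.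

Lemma card_fibre_box n (a b : alt) (v : {ffun 'I_n -> bool}) (i : 'I_n) : a != b ->
  #|fibre_box a b v i| = 3.
Proof.
by move=> ab; rewrite fibre_boxE //; case: (v i); apply: card_above; rewrite // eq_sym.
Qed.

Lemma fibre_box_oriented n (a b : alt) (v : {ffun 'I_n -> bool}) (i : 'I_n) : a != b ->
  oriented a b (fibre_box a b v i).
Proof.
by move=> ab; rewrite /oriented fibre_boxE //; case: (v i); [left | right] => r; rewrite inE.
Qed.

Lemma card_fibre n (a b : alt) (x : profile n) : a != b ->
  #|[set x' : profile n | pairvec x' a b == pairvec x a b]| = 3 ^ n.
Proof.
move=> ab; rewrite -sum1_card (eq_bigl (inbox (fibre_box a b (pairvec x a b)))).
  by rewrite sum_box_const ?muln1 // => i; apply: card_fibre_box.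
by move=> x'; rewrite inbox_fibre inE.
Qed.

Definition pair_count n (F : SCF n) (a b : alt) : nat :=
  \sum_(x : profile n)
     #|[set x' : profile n | (pairvec x' a b == pairvec x a b) && (F x == a) && (F x' == b)]|.

Definition manip_count n (F : SCF n) (i : 'I_n) : nat :=
  #|[set p : profile n * L3 | above (p.1 i) (F (upd p.1 i p.2)) (F p.1)]|.

Section Fibres.
Variables (n : nat) (F : SCF n) (a b : alt).

Lemma pairs_by_fibres :
  pair_count F a b = \sum_(v : {ffun 'I_n -> bool}) pairs_box (fibre_box a b v) F a b.
Proof.
rewrite /pair_count (partition_big (fun x : profile n => pairvec x a b) predT) //=.
apply: eq_bigr => v _; rewrite /pairs_box.
rewrite [RHS](eq_bigl (fun x => pairvec x a b == v)) => [|x]; last exact: inbox_fibre.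
apply: eq_bigr => x /eqP xv; rewrite -sum1_card big_mkcond [RHS]big_mkcond /=.
apply: eq_bigr => x' _; rewrite inE inbox_fibre xv.
by case: (pairvec x' a b == v); case: (F x == a); case: (F x' == b).
Qed.

Lemma manip_by_fibres :
  \sum_(v : {ffun 'I_n -> bool}) manip_box (fibre_box a b v) F
  <= \sum_(i < n) manip_count F i.
Proof.
rewrite exchange_big /=; apply: leq_sum => i _; rewrite /manip_count.
rewrite -sum1_card (partition_big (fun p => pairvec p.1 a b) predT) //=.
apply: leq_sum => v _; rewrite pair_big_dep /= big_mkcond [X in _ <= X]big_mkcond.
apply: leq_sum => -[x y] _; rewrite inbox_fibre !inE /=.
by case: (pairvec x a b == v); rewrite ?andbF //=; case: ifP; case: (above (x i) _ _).
Qed.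

End Fibres.

Lemma pair_count_bound n (F : SCF n) (a b : alt) : a != b ->
  pair_count F a b <= 3 ^ n * \sum_(i < n) manip_count F i.
Proof.
move=> ab; rewrite pairs_by_fibres.
apply: (@leq_trans (\sum_v 3 ^ n * manip_box (fibre_box a b v) F)).
  apply: leq_sum => v _; apply: pairs_le_manip => // i.
    exact: card_fibre_box.
  exact: fibre_box_oriented.
by rewrite -big_distrr leq_mul2l manip_by_fibres orbT.
Qed.

Lemma card_profile n : #|profile n| = 6 ^ n.
Proof. by rewrite card_ffun card_L3 card_ord. Qed.

Local Open Scope ring_scope.

Lemma MabE n (F : SCF n) (a b : alt) : a != b ->
  Mab F a b = (pair_count F a b)%:R / (6 ^ n * 3 ^ n)%:R.
Proof.
move=> ab; rewrite /Mab /pair_count natr_sum mulr_suml; apply: eq_bigr => x _.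
by rewrite card_fibre // card_profile natrM invfM mulrA mulrC mulrA.
Qed.

Lemma MiE n (F : SCF n) (i : 'I_n) : Mi F i = (manip_count F i)%:R / (6 ^ n * 6)%:R.
Proof. by rewrite /Mi card_profile card_L3 natrM. Qed.

Theorem lemma3p2 (n : nat) (F : SCF n) (a b : alt) :
  a != b -> Mab F a b <= 6%:R * \sum_(i < n) Mi F i.
Proof.
move=> ab; rewrite MabE // ler_pdivrMr ?ltr0n ?muln_gt0 ?expn_gt0 //.
under eq_bigr => i _ do rewrite MiE.
rewrite -mulr_suml -natr_sum.
have six_n : (6 ^ n)%:R != 0 :> rat by rewrite pnatr_eq0 expn_eq0.
have -> : 6 * ((\sum_i manip_count F i)%:R / (6 ^ n * 6)%:R) * (6 ^ n * 3 ^ n)%:R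
    = ((3 ^ n * \sum_i manip_count F i)%:R : rat).
  by rewrite !natrM; field.
by rewrite ler_nat; apply: pair_count_bound.
Qed.
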